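(* Let $S$ be an idempotent $\omega$-continuous semiring, $\mathcal X$ a finite set of variables, and $\vec f=(f_x)_{x\in\mathcal X}$ a vector of polynomials over $S$ in $\mathcal X$ in which every monomial contains at least one variable. Let $M^{(0)}=\widehat{\vec f}$ and $M^{(n+1)}=\mathrm{eval}_{M^{(n)}}(M^{(n)})$. Then for every $n\in\mathbb N$ and every $x\in\mathcal X$, $$M^{(n)}_x\;=\;\bigoplus_{t\in T_x^{\le 2^n}}\llbracket \mathrm{yield}(t)\rrbracket$$ as functions $S^{\mathcal X}\to S$.
   Context: Semiring notions: a semiring $(S,\oplus,\odot,0,1)$; natural order $a\le a\oplus b$; $\omega$-continuous: naturally ordered, chains have suprema, countable sums $\bigoplus_{i}a_i:=\sup_i(a_0\oplus\cdots\oplus a_i)$ commute with $\odot$ on both sides and are invariant under partitioning of the index set; idempotent: $a\oplus a=a$. Monomials are words $a_1x_{i_1}\cdots a_lx_{i_l}a_{l+1}$ ($a_j\in S$, $x_{i_j}\in\mathcal X$), polynomials finite sums of monomials; they are interpreted as functions $S^{\mathcal X}\to S$, and functions $S^{\mathcal X}\to S$ (and vectors of them) form a semiring under pointwise operations. For a vector $\vec v=(v_y)_{y\in\mathcal X}$ of functions and a function $g$, $\mathrm{eval}_{\vec v}(g)(\vec c)=g(v_{y}(\vec c))_{y\in\mathcal X}$ (composition), applied componentwise to vectors. Linear completion: a substitution $\{x\mapsto g\}$ applied to a polynomial $h$ yields the set $h\{x\mapsto g\}$ of polynomials obtained by replacing exactly one occurrence of $x$ in $h$ by $g$. Linear polynomial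 substitutions for $x$ are $\{x\mapsto x\}$ or $\{x\mapsto g\}$ with $g\in f_x\sigma_y$ for some variable $y$ and linear polynomial substitution $\sigma_y$ for $y$ (mutual induction). $\widehat{\vec f}$ is the vector with components $\widehat{f_x}=\bigoplus_{\sigma_x}x\sigma_x$, where $x\{x\mapsto g\}=g$ and the sum ranges over all linear polynomial substitutions for $x$. Derivation trees: associate with $\vec f$ the context-free grammar $G_{\vec f}$ with non-terminals $\mathcal X$, terminals the semiring elements, and a production $y\to w(m)$ for each monomial $m$ of $f_y$, where $w(m)$ is $m$ read as a word over $S\cup\mathcal X$. A derivation tree from $x$ (variables allowed at leaves) is a finite ordered tree whose root is labeled $x$, each inner node is labeled by a variable $y$ with children labeled, left to right, by the symbols of $w(m)$ for a production $y\to w(m)$, and each leaf is labeled by a semiring element or a variable. $\mathrm{yield}(t)$ is the word of leaf labels read left to right, and $\llbracket w\rrbracket$ is the monomial obtained by reading concatenation as $\odot$. $T_x^{\le k}$ is the set of derivation trees from $x$ of dimension at most $k$, where dimension is: $0$ for a leaf; $\dim$ of the child if exactly one child; otherwise, with $t_1,t_2$ children of highest and second-highest dimension, $\dim(t_1)+1$ if $\dim(t_1)=\dim(t_2)$ and $\dim(t_1)$ if $\dim(t_1)>\dim(t_2)$. *)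

From HB Require Import structures.
From mathcomp Require Import all_boot all_order all_algebra.
From Stdlib Require Import ClassicalEpsilon.
Set Implicit Arguments. Unset Strict Implicit. Unset Printing Implicit Defensive.
Import GRing.Theory.
Local Open Scope ring_scope.

Section Semiring.
Variable S : pzSemiRingType.

Definition nle (a b : S) : Prop := exists c, a + c = b.

Definition is_sup (u : nat -> S) (s : S) : Prop :=
  (forall n, nle (u n) s) /\ (forall b, (forall n, nle (u n) b) -> nle s b).

Definition psum (a : nat -> S) (n : nat) : S := \sum_(i < n) a i.

Definition csum (a : nat -> S) : S :=
  epsilon (inhabits 0) (is_sup (psum a)).

Definition csumT (I : countType) (F : I -> S) : S :=
  csum (fun n => if @unpickle I n is Some i then F i else 0).

Definition idempotent_sr : Prop := forall a : S, a + a = a.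

Record omega_continuous : Prop := {
  (* naturally ordered: the natural order is a partial order
     (reflexivity/transitivity hold in every semiring) *)
  nle_antisym : forall a b, nle a b -> nle b a -> a = b;
  chain_sup : forall u : nat -> S, (forall n, nle (u n) (u n.+1)) ->
                exists s, is_sup u s;
  csum_mull : forall c (a : nat -> S), c * csum a = csum (fun i => c * a i);
  csum_mulr : forall c (a : nat -> S), csum a * c = csum (fun i => a i * c);
  (* invariance under partitioning the index set into blocks
     {i | blk i = j}, j in nat (a block is summed in increasing order) *)
  csum_partition : forall (a : nat -> S) (blk : nat -> nat),
     csum (fun j => csum (fun i => if blk i == j then a i else 0)) = csum a
}.

End Semiring.

Section Polys.
Variables (S : pzSemiRingType) (X : finType).

(* monomial a_1 x_(i_1) a_2 ... a_l x_(i_l) a_(l+1), stored as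
   ([:: (a_1, x_(i_1)); ...; (a_l, x_(i_l))], a_(l+1)) *)
Definition smono := (seq (S * X) * S)%type.
Definition spoly := seq smono.

Definition meval (m : smono) (c : X -> S) : S :=
  foldr (fun p r => p.1 * c p.2 * r) m.2 m.1.
Definition peval (h : spoly) (c : X -> S) : S := \sum_(m <- h) meval m c.

(* concatenation of words (adjacent constants are multiplied) *)
Definition mcat (m1 m2 : smono) : smono :=
  match m2.1 with
  | [::] => (m1.1, m1.2 * m2.2)
  | (d, y) :: l2 => (m1.1 ++ (m1.2 * d, y) :: l2, m2.2)
  end.

Definition var_poly (x : X) : spoly := [:: ([:: (1, x)], 1)].

(* occurrence number k in the j-th monomial of h: returns the variable y
   at that occurrence and the map g |-> h with that occurrence replaced by g *)
Definition occ_at (h : spoly) (j k : nat) : option (X * (spoly -> spoly)) :=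
  match drop j h with
  | m :: hr =>
      match drop k m.1 with
      | (a, y) :: rest =>
          Some (y, fun g => take j h ++
                  [seq mcat (mcat (take k m.1, a) n) (rest, m.2) | n <- g] ++ hr)
      | [::] => None
      end
  | [::] => None
  end.

Variable f : X -> spoly.

(* Linear polynomial substitutions {x |-> g} for x, encoded by the sequence
   of occurrence choices used in their (mutually inductive) construction:
   [::] codes {x |-> x};  (j,k) :: cs codes {x |-> g} with g in f_x sigma_y,
   where y is the variable at occurrence k of monomial j of f_x and
   sigma_y is coded by cs.  Returns the polynomial x sigma_x = g. *)
Fixpoint linsub (x : X) (cs : seq (nat * nat)) : option spoly :=
  match cs with
  | [::] => Some (var_poly x)
  | (j, k) :: cs' =>
      match occ_at (f x) j k with
      | Some (y, rep) => omap rep (linsub y cs')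
      | None => None
      end
  end.

Definition hatf (x : X) (c : X -> S) : S :=
  csumT (fun cs : seq (nat * nat) =>
           if linsub x cs is Some g then peval g c else 0).

Fixpoint Miter (n : nat) : X -> (X -> S) -> S :=
  match n with
  | 0 => hatf
  | n'.+1 => fun x c => Miter n' x (fun y => Miter n' y c)
  end.

End Polys.

(* Derivation trees of G_f.  The label of the root (a variable) is given
   externally.  DLeaf: the node is a leaf (labelled by its variable).
   DNode j ts: inner node labelled y using the production y -> w(m) for the
   j-th monomial m of f_y; its children are, left to right,
   a_1, t_1, a_2, ..., t_l, a_(l+1), where the a_i are semiring-element leaves
   and ts = [:: t_1; ...; t_l] are the subtrees for the variables of m. *)
Inductive dtree := DLeaf | DNode of nat & seq dtree.

Fixpoint dtree_enc (t : dtree) : GenTree.tree nat :=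
  match t with
  | DLeaf => GenTree.Node 0 [::]
  | DNode j ts => GenTree.Node j.+1
      ((fix go ts := match ts with [::] => [::] | t :: ts' => dtree_enc t :: go ts' end) ts)
  end.

Fixpoint dtree_dec (g : GenTree.tree nat) : option dtree :=
  match g with
  | GenTree.Leaf _ => None
  | GenTree.Node 0 _ => Some DLeaf
  | GenTree.Node j.+1 gs => Some (DNode j
      ((fix go gs := match gs with
                     | [::] => [::]
                     | g :: gs' => if dtree_dec g is Some t then t :: go gs' else go gs'
                     end) gs))
  end.

Lemma dtree_encK : pcancel dtree_enc dtree_dec.
Proof.
rewrite /pcancel; fix IH 1. case=> [|j ts] //=. congr (Some (DNode j _)).
elim: ts => [|t ts IHts] //=. by rewrite IH IHts.
Qed.

HB.instance Definition _ := Countable.copy dtree (pcan_type dtree_encK).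

Definition dim_children (ds : seq nat) : nat :=
  match ds with
  | [::] => 0
  | [:: d] => d
  | _ => let s := sort geq ds in
         let d1 := nth 0 s 0 in let d2 := nth 0 s 1 in
         if d1 == d2 then d1.+1 else d1
  end.

Fixpoint dtree_dim (t : dtree) : nat :=
  match t with
  | DLeaf => 0
  | DNode j ts => dim_children
      (0 :: (fix go ts := match ts with
                          | [::] => [::]
                          | t :: ts' => dtree_dim t :: 0 :: go ts'
                          end) ts)
  end.

Section Trees.
Variables (S : pzSemiRingType) (X : finType) (f : X -> spoly S X).

Definition mono0 : smono S X := ([::], 0).

Fixpoint dwf (y : X) (t : dtree) : bool :=
  match t with
  | DLeaf => true
  | DNode j ts => (j < size (f y))%N &&
      (fix go (P : seq (S * X)) ts {struct ts} := match P, ts with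
        | (a, z) :: P', t' :: ts' => dwf z t' && go P' ts'
        | [::], [::] => true
        | _, _ => false
        end) (nth mono0 (f y) j).1 ts
  end.

Fixpoint dyield (c : X -> S) (y : X) (t : dtree) : S :=
  match t with
  | DLeaf => c y
  | DNode j ts =>
      let m := nth mono0 (f y) j in
      (fix go (P : seq (S * X)) ts {struct ts} := match P, ts with
        | (a, z) :: P', t' :: ts' => a * dyield c z t' * go P' ts'
        | _, _ => m.2
        end) m.1 ts
  end.

Definition treesum (k : nat) (x : X) (c : X -> S) : S :=
  csumT (fun t : dtree => if dwf x t && (dtree_dim t <= k)%N then dyield c x t else 0).

End Trees.

From mathcomp Require Import all_boot all_order all_algebra zify.
From Stdlib Require Import ClassicalEpsilon.
Set Implicit Arguments. Unset Strict Implicit. Unset Printing Implicit Defensive.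

(* In an idempotent omega-continuous semiring a countable sum is the least
   upper bound of its terms for the natural order, so two such sums agree as
   soon as every term of each is dominated by the other sum.  For the base
   case, the polynomials x sigma_x of the linear substitutions have exactly
   the yields of the "spine" trees as monomials: trees of dimension at most 1,
   in which every inner node has at most one non-leaf child.  For the
   induction step, evaluating the trees of dimension <= K at the sums over
   trees of dimension <= K grafts trees of dimension <= K onto the leaves,
   which raises the dimension by at most K; conversely, cutting every maximal
   subtree of dimension <= K off a tree of dimension <= 2K leaves a tree of
   dimension <= K.  Iterating gives the bound 2^n. *)

Lemma leq_dim_children (ds : seq nat) (m : nat) :
  (dim_children ds <= m) = all (fun d => d <= m) ds && (count (fun d => m <= d) ds <= 1).
Proof.
case: ds => [|d0 [|d1 ds]]; first by [].
  by rewrite /= addn0 andbT leq_b1 andbT.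
rewrite /dim_children; set l := [:: d0, d1 & ds]; set s := sort geq l.
have s_sorted : sorted geq s by apply: sort_sorted => a b; exact: leq_total.
have s_perm : perm_eq s l by rewrite /s perm_sort.
rewrite -(perm_all _ s_perm) -((permP s_perm) (fun d => m <= d)).
have : 2 <= size s by rewrite size_sort.
case: s s_sorted {s_perm} => [|e1 [|e2 s]] //= /andP [le21 sorted_s] _.
have le_e2 : all (fun d => d <= e2) s.
  have := order_path_min (fun y x z (h1 : x >= y) (h2 : y >= z) => leq_trans h2 h1) sorted_s.
  by apply: sub_all => x /=.
have count0 : e2 < m -> count (fun d => m <= d) s = 0.
  move=> lt; apply/eqP; rewrite -leqn0 leqNgt -has_count; apply/hasP => -[x xs].
  by move: (allP le_e2 x xs) => h1 h2; move: (leq_trans h2 h1); rewrite leqNgt lt.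
have all_le : e2 < m -> all (fun d => d <= m) s.
  by move=> lt; apply: sub_all le_e2 => x h; exact: (leq_trans h (ltnW lt)).
case: eqP => [E|NE].
- rewrite -E in all_le count0 *; case: (leqP e1.+1 m) => h /=.
  + by rewrite (leq_trans (leqnSn _) h) (all_le h) (count0 h) addn0 (leqNgt m e1) h.
  + case: (leqP e1 m) => h2 //=.
    have -> : m = e1 by apply/eqP; rewrite eqn_leq h2 -ltnS h.
    by rewrite leqnn /= !add1n ltnS ltn0 andbF.
- have lt21 : e2 < e1 by rewrite ltn_neqAle le21 andbT; apply/eqP => h; apply: NE; rewrite h.
  case: (leqP e1 m) => h //=.
  rewrite (leq_trans le21 h) (all_le (leq_trans lt21 h)) (count0 (leq_trans lt21 h)) addn0.
  by rewrite (leqNgt m e2) (leq_trans lt21 h) /= addn0 leq_b1.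
Qed.

Lemma leq_count_all2 (A B : Type) (R : A -> B -> bool) (P : pred A) (Q : pred B) l1 l2 :
  all2 R l1 l2 -> (forall a b, R a b -> P a -> Q b) -> count P l1 <= count Q l2.
Proof.
move=> H HR; elim: l1 l2 H => [|a l1 IH] [|b l2] //= /andP [hab h].
by apply: leq_add; [case: (P a) (HR a b hab) => // -> | exact: IH].
Qed.

Lemma all_all2 (A B : Type) (R : A -> B -> bool) (P : pred A) (Q : pred B) l1 l2 :
  all2 R l1 l2 -> (forall a b, R a b -> Q b -> P a) -> all Q l2 -> all P l1.
Proof.
move=> H HR; elim: l1 l2 H => [|a l1 IH] [|b l2] //= /andP [hab h] /andP [hb hl].
by rewrite (HR _ _ hab hb) (IH _ h hl).
Qed.

Lemma leq_dim_children_add (K : nat) l1 l2 :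
  all2 (fun a b => a <= b + K) l1 l2 -> dim_children l1 <= dim_children l2 + K.
Proof.
move=> le_l; have := leqnn (dim_children l2).
rewrite !leq_dim_children => /andP [all_l2 count_l2].
apply/andP; split; first by apply: all_all2 le_l _ all_l2 => a b /=; lia.
by apply: leq_trans count_l2; apply: leq_count_all2 le_l _ => a b /=; lia.
Qed.

Lemma leq_dim_children_sub (K : nat) l1 l2 :
  all2 (fun a b => a <= b - K) l1 l2 -> K < dim_children l2 ->
  dim_children l1 <= dim_children l2 - K.
Proof.
move=> le_l lt_K; have := leqnn (dim_children l2).
rewrite !leq_dim_children => /andP [all_l2 count_l2].
apply/andP; split; first by apply: all_all2 le_l _ all_l2 => a b /=; lia.
apply: leq_trans count_l2; apply: leq_count_all2 le_l _ => a b le_ab le_a.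
by have := leq_trans le_a le_ab; move: lt_K; lia.
Qed.

Lemma dim_children_gt0 l : 2 <= size l -> 0 < dim_children l.
Proof.
move=> h; rewrite lt0n; apply/negP => /eqP E.
have := leqnn (dim_children l); rewrite {2}E leq_dim_children => /andP [_].
by rewrite (eq_count (a2 := predT)) // count_predT leqNgt h.
Qed.

(* The 0s are the constant leaves a_2, ..., a_(l+1); dtree_dim adds the
   leading a_1. *)
Fixpoint child_dims (ts : seq dtree) : seq nat :=
  match ts with [::] => [::] | t :: ts' => dtree_dim t :: 0 :: child_dims ts' end.

Lemma dtree_dimE j ts : dtree_dim (DNode j ts) = dim_children (0 :: child_dims ts).
Proof. by []. Qed.

Lemma child_dims_cat ts1 ts2 : child_dims (ts1 ++ ts2) = child_dims ts1 ++ child_dims ts2.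
Proof. by elim: ts1 => //= t ts ->. Qed.

Lemma child_dims_leaves k : child_dims (nseq k DLeaf) = nseq (k + k) 0.
Proof. by elim: k => //= k ->; rewrite addnS. Qed.

Lemma size_child_dims ts : size (child_dims ts) = size ts + size ts.
Proof. by elim: ts => //= t ts ->; rewrite addnS. Qed.

Lemma all2_child_dims (R : nat -> nat -> bool) ts1 ts2 :
  R 0 0 -> all2 (fun t1 t2 => R (dtree_dim t1) (dtree_dim t2)) ts1 ts2 ->
  all2 R (child_dims ts1) (child_dims ts2).
Proof.
move=> R0; elim: ts1 ts2 => [|t1 ts1 IH] [|t2 ts2] //= /andP [h1 h2].
by rewrite h1 R0 IH.
Qed.

Lemma take_drop_cons (T : Type) (s : seq T) k x rest :
  drop k s = x :: rest -> s = take k s ++ x :: rest /\ size (take k s) = k.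
Proof.
move=> E; split; first by rewrite -E cat_take_drop.
by apply: size_takel; case: leqP => // /ltnW lt_s; move: E; rewrite drop_oversize.
Qed.

Definition spine (j k : nat) (t : dtree) (r : nat) : dtree :=
  DNode j (nseq k DLeaf ++ t :: nseq r DLeaf).

Lemma spine_dim j k t r : dtree_dim t <= 1 -> dtree_dim (spine j k t r) <= 1.
Proof.
move=> dim_t; rewrite dtree_dimE leq_dim_children child_dims_cat /= !child_dims_leaves.
rewrite /= all_cat count_cat /= !all_nseq !count_nseq /= dim_t !orbT /= !mul0n addn0 add0n.
by case: (1 <= dtree_dim t).
Qed.

Lemma leaves_node_dim j r : dtree_dim (DNode j (nseq r DLeaf)) <= 1.
Proof.
rewrite dtree_dimE leq_dim_children /= child_dims_leaves /= all_nseq count_nseq /= orbT.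
by rewrite mul0n.
Qed.

Lemma leaves_split ts : ts != [::] -> count (fun t => t != DLeaf) ts <= 1 ->
  exists k t r, ts = nseq k DLeaf ++ t :: nseq r DLeaf.
Proof.
elim: ts => [|t0 ts IH] // _ /=; case: eqP => [-> | t0_node] /=.
  case: ts IH => [|t1 ts] IH; first by exists 0, DLeaf, 0.
  by rewrite add0n => /(IH isT) [k [t [r ->]]]; exists k.+1, t, r.
rewrite add1n ltnS leqn0 => /eqP no_node.
exists 0, t0, (size ts); congr (_ :: _); apply/all_pred1P/allP => t t_ts.
apply/negPn/negP => t_node.
have : 0 < count (fun t => t != DLeaf) ts by rewrite -has_count; apply/hasP; exists t.
by rewrite no_node.
Qed.

Lemma dtree_ind_in (P : dtree -> Prop) : P DLeaf ->
  (forall j ts, (forall t, t \in ts -> P t) -> P (DNode j ts)) -> forall t, P t.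
Proof.
move=> P_leaf P_node; fix IH 1; case=> [|j ts]; first exact: P_leaf.
apply: P_node; move: ts; fix IHts 1; case=> [|t0 ts] t.
  by rewrite in_nil => /negP; case.
by rewrite in_cons => /orP [/eqP -> | /IHts]; [exact: IH | apply].
Qed.

Import GRing.Theory.
Local Open Scope ring_scope.
Local Notation "a <=' b" := (nle a b) (at level 70).

Section NaturalOrder.
Variable S : pzSemiRingType.
Hypothesis idem : idempotent_sr S.
Hypothesis oc : omega_continuous S.

Lemma nle_refl (a : S) : a <=' a.
Proof. by exists 0; rewrite addr0. Qed.

Lemma nle_trans (a b d : S) : a <=' b -> b <=' d -> a <=' d.
Proof. by move=> [u <-] [v <-]; exists (u + v); rewrite addrA. Qed.

Lemma nle_addr (a b : S) : a <=' a + b.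
Proof. by exists b. Qed.

Lemma nle_addl (a b : S) : a <=' b + a.
Proof. by exists b; rewrite addrC. Qed.

Lemma nle0 (a : S) : 0 <=' a.
Proof. by exists a; rewrite add0r. Qed.

Lemma nle_mull (c a b : S) : a <=' b -> c * a <=' c * b.
Proof. by move=> [u <-]; exists (c * u); rewrite mulrDr. Qed.

Lemma nle_mulr (c a b : S) : a <=' b -> a * c <=' b * c.
Proof. by move=> [u <-]; exists (u * c); rewrite mulrDl. Qed.

Lemma nle_mul2 (a a' b b' : S) : a <=' a' -> b <=' b' -> a * b <=' a' * b'.
Proof. by move=> h1 h2; apply: nle_trans (nle_mulr _ h1) (nle_mull _ h2). Qed.

Lemma nle_add_lub (a b z : S) : a <=' z -> b <=' z -> a + b <=' z.
Proof.
move=> [u Hu] [v Hv]; exists (u + v).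
by rewrite addrACA -[in RHS](idem z) -{1}Hu -Hv addrCA addrA.
Qed.

Lemma bigsum_ub (T : eqType) (F : T -> S) (g : seq T) m :
  m \in g -> F m <=' \sum_(m <- g) F m.
Proof.
elim: g => [|m0 g IH] //; rewrite in_cons big_cons => /orP [/eqP ->|h].
  exact: nle_addr.
exact: nle_trans (IH h) (nle_addl _ _).
Qed.

Lemma bigsum_lub (T : eqType) (F : T -> S) (g : seq T) z :
  (forall m, m \in g -> F m <=' z) -> \sum_(m <- g) F m <=' z.
Proof.
elim: g => [|m g IH] H; first by rewrite big_nil; apply: nle0.
rewrite big_cons; apply: nle_add_lub; first by apply: H; rewrite mem_head.
by apply: IH => m' h; apply: H; rewrite in_cons h orbT.
Qed.

Lemma csum_sup (a : nat -> S) : is_sup (psum a) (csum a).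
Proof.
rewrite /csum; apply: epsilon_spec; apply: (chain_sup oc) => n.
by rewrite /psum big_ord_recr /=; apply: nle_addr.
Qed.

Lemma csum_ub (a : nat -> S) i : a i <=' csum a.
Proof.
apply: nle_trans ((csum_sup a).1 i.+1).
by rewrite /psum big_ord_recr /=; apply: nle_addl.
Qed.

Lemma csum_lub (a : nat -> S) z : (forall i, a i <=' z) -> csum a <=' z.
Proof.
move=> H; apply: (csum_sup a).2; elim=> [|n IH].
  by rewrite /psum big_ord0; apply: nle0.
by rewrite /psum big_ord_recr /=; apply: nle_add_lub.
Qed.

Lemma csumT_ub (I : countType) (F : I -> S) i : F i <=' csumT F.
Proof.
have := csum_ub (fun n => if @unpickle I n is Some i then F i else 0) (pickle i).
by rewrite pickleK.
Qed.

Lemma csumT_lub (I : countType) (F : I -> S) z : (forall i, F i <=' z) -> csumT F <=' z.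
Proof.
by move=> H; apply: csum_lub => n; case: unpickle => [i|]; [exact: H | exact: nle0].
Qed.

Lemma csumT_mul_lub (I : countType) (F : I -> S) p r z :
  (forall i, p * F i * r <=' z) -> p * csumT F * r <=' z.
Proof.
move=> H; rewrite /csumT (csum_mull oc) (csum_mulr oc); apply: csum_lub => n.
by case: unpickle => [i|]; [exact: H | rewrite mulr0 mul0r; exact: nle0].
Qed.

Lemma csumT_eq (I J : countType) (F : I -> S) (G : J -> S) :
  (forall i, F i <=' csumT G) -> (forall j, G j <=' csumT F) -> csumT F = csumT G.
Proof. by move=> FG GF; apply: (nle_antisym oc); apply: csumT_lub. Qed.

End NaturalOrder.

Section Trees.
Variables (S : pzSemiRingType) (X : finType) (f : X -> spoly S X).

Fixpoint dwf_children (P : seq (S * X)) (ts : seq dtree) {struct ts} : bool :=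
  match P, ts with
  | (a, z) :: P', t' :: ts' => dwf f z t' && dwf_children P' ts'
  | [::], [::] => true
  | _, _ => false
  end.

Lemma dwfE y j ts :
  dwf f y (DNode j ts) = (j < size (f y))%N && dwf_children (nth (mono0 S X) (f y) j).1 ts.
Proof. by []. Qed.

Definition yield_children (c : X -> S) (b : S) :=
  fix go (P : seq (S * X)) (ts : seq dtree) {struct ts} : S :=
  match P, ts with
  | (a, z) :: P', t' :: ts' => a * dyield f c z t' * go P' ts'
  | _, _ => b
  end.

Lemma dyieldE c y j ts : dyield f c y (DNode j ts) =
  yield_children c (nth (mono0 S X) (f y) j).2 (nth (mono0 S X) (f y) j).1 ts.
Proof. by []. Qed.

Lemma dwf_children_size P ts : dwf_children P ts -> size P = size ts.
Proof. by elim: P ts => [|[a z] P IH] [|t ts] //= /andP [_ /IH ->]. Qed.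

Lemma dwf_children_cat P1 P2 ts1 ts2 : size P1 = size ts1 ->
  dwf_children (P1 ++ P2) (ts1 ++ ts2) = dwf_children P1 ts1 && dwf_children P2 ts2.
Proof. by elim: P1 ts1 => [|[a z] P1 IH] [|t ts1] //= [/IH ->]; rewrite andbA. Qed.

Lemma dwf_children_leaves P : dwf_children P (nseq (size P) DLeaf).
Proof. by elim: P => [|[a z] P IH]. Qed.

Hypothesis idem : idempotent_sr S.
Hypothesis oc : omega_continuous S.

Lemma dyield_le_treesum (c : X -> S) k y t : dwf f y t -> (dtree_dim t <= k)%N ->
  dyield f c y t <=' treesum f k y c.
Proof.
move=> wf_t dim_t; rewrite /treesum.
by have := csumT_ub oc (fun t => if dwf f y t && (dtree_dim t <= k)%N then dyield f c y t else 0) t;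
  rewrite wf_t dim_t.
Qed.

Lemma treesum_mono (c : X -> S) k k' y :
  (k <= k')%N -> treesum f k y c <=' treesum f k' y c.
Proof.
move=> le_k; apply: (csumT_lub idem oc) => t.
case: ifP => [/andP [wf_t dim_t]|_]; last exact: nle0.
by apply: dyield_le_treesum => //; apply: leq_trans le_k.
Qed.

Section Grafting.
Variables (K : nat) (c c' : X -> S).
Hypothesis c'E : forall y, c' y = treesum f K y c.

(* The children are replaced one at a time, from left to right: p collects
   the factors already rewritten, and the sum over the trees replacing the
   current child is pulled out of the product by csumT_mul_lub. *)
Lemma yield_children_graft_le b (P : seq (S * X)) ts p z :
  dwf_children P ts ->
  (forall t, t \in ts -> forall y k, dwf f y t -> (dtree_dim t + K <= k)%N ->
       dyield f c' y t <=' treesum f k y c) ->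
  (forall us, dwf_children P us ->
      all2 (fun u t => dtree_dim u <= dtree_dim t + K)%N us ts ->
      p * yield_children c b P us <=' z) ->
  p * yield_children c' b P ts <=' z.
Proof.
elim: P ts p => [|[a z0] P IH] [|t ts] p //= wf_ts IHt graft_le; first exact: (graft_le [::]).
case/andP: wf_ts => wf_t wf_ts; rewrite mulrA mulrA.
have le_t := IHt t (mem_head _ _) z0 _ wf_t (leqnn _).
apply: nle_trans (nle_mulr _ (nle_mull _ le_t)) _.
apply: (csumT_mul_lub idem oc) => u.
case: ifP => [/andP [wf_u dim_u]|_]; last by rewrite mulr0 mul0r; apply: nle0.
apply: IH => // [t1 t1_ts|us wf_us dim_us]; first by apply: IHt; rewrite in_cons t1_ts orbT.
by have := graft_le (u :: us); rewrite /= wf_u wf_us dim_u dim_us !mulrA; apply.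
Qed.

Lemma dyield_graft_le t : forall y k, dwf f y t -> (dtree_dim t + K <= k)%N ->
  dyield f c' y t <=' treesum f k y c.
Proof.
elim/dtree_ind_in: t => [|j ts IHts] y k.
  by move=> _ le_k /=; rewrite c'E; apply: treesum_mono.
rewrite dwfE => /andP [lt_j wf_ts] le_k.
rewrite dyieldE -[X in X <=' _]mul1r; apply: yield_children_graft_le => // us wf_us dim_us.
rewrite mul1r -dyieldE; apply: dyield_le_treesum; first by rewrite dwfE lt_j wf_us.
by apply: leq_trans le_k; rewrite !dtree_dimE; apply/leq_dim_children_add/all2_child_dims.
Qed.

Lemma yield_children_cut_le b (P : seq (S * X)) ts :
  dwf_children P ts ->
  (forall t, t \in ts -> forall y, dwf f y t -> exists t0, [/\ dwf f y t0,
       (dtree_dim t0 <= dtree_dim t - K)%N & dyield f c y t <=' dyield f c' y t0]) ->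
  exists ts0, [/\ dwf_children P ts0,
      all2 (fun t0 t => dtree_dim t0 <= dtree_dim t - K)%N ts0 ts &
      yield_children c b P ts <=' yield_children c' b P ts0].
Proof.
elim: P ts => [|[a z0] P IH] [|t ts] //= wf_ts IHt.
  by exists [::]; split => //; apply: nle_refl.
case/andP: wf_ts => wf_t wf_ts.
have [t0 [wf_t0 dim_t0 le_t0]] := IHt t (mem_head _ _) z0 wf_t.
have [ts0 [wf_ts0 dim_ts0 le_ts0]] :=
  IH ts wf_ts (fun t1 h => IHt t1 (mem_behead (s := t :: ts) h)).
exists (t0 :: ts0); split => /=; [by rewrite wf_t0 | by rewrite dim_t0 |].
by apply: nle_mul2 => //; apply: nle_mull.
Qed.

(* Every tree evaluated at c is dominated by the tree obtained by cutting off
   its subtrees of dimension <= K, evaluated at c'. *)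
Lemma dyield_cut_le t : forall y, dwf f y t -> exists t0, [/\ dwf f y t0,
       (dtree_dim t0 <= dtree_dim t - K)%N & dyield f c y t <=' dyield f c' y t0].
Proof.
elim/dtree_ind_in: t => [|j ts IHts] y wf_t.
  by exists DLeaf; split => //=; rewrite c'E; exact: (dyield_le_treesum c wf_t (leq0n K)).
case: (leqP (dtree_dim (DNode j ts)) K) => dim_t.
  by exists DLeaf; split => //; rewrite [dyield _ _ _ DLeaf]/= c'E; exact: dyield_le_treesum.
move: wf_t; rewrite dwfE => /andP [lt_j wf_ts].
have [ts0 [wf_ts0 dim_ts0 le_ts0]] := yield_children_cut_le (nth (mono0 S X) (f y) j).2 wf_ts IHts.
exists (DNode j ts0); split; [by rewrite dwfE lt_j wf_ts0 | | by rewrite !dyieldE].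
move: dim_t; rewrite !dtree_dimE => dim_t.
by apply: leq_dim_children_sub dim_t; apply: all2_child_dims.
Qed.

Lemma treesum_graft x : treesum f K x c' = treesum f (K + K) x c.
Proof.
apply: (csumT_eq idem oc) => t; case: ifP => [/andP [wf_t dim_t]|_]; try exact: nle0.
  by apply: dyield_graft_le; rewrite ?leq_add2r.
have [t0 [wf_t0 dim_t0 le_t0]] := dyield_cut_le wf_t.
apply: (nle_trans le_t0); apply: dyield_le_treesum => //.
by apply: leq_trans dim_t0 _; rewrite leq_subLR.
Qed.

End Grafting.
End Trees.

Section LinearSubstitutions.
Variables (S : pzSemiRingType) (X : finType) (f : X -> spoly S X) (c : X -> S).

Local Notation mono y j := (nth (mono0 S X) (f y) j).

Definition word_eval (P : seq (S * X)) : S := foldr (fun p r => p.1 * c p.2 * r) 1 P.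

Lemma foldr_word_eval z P : foldr (fun p r => p.1 * c p.2 * r) z P = word_eval P * z.
Proof. by elim: P => [|p P IH] /=; rewrite ?mul1r // IH !mulrA. Qed.

Lemma mevalE P b : meval (P, b) c = word_eval P * b.
Proof. exact: foldr_word_eval. Qed.

Lemma meval_mcat m1 m2 : meval (mcat m1 m2) c = meval m1 c * meval m2 c.
Proof.
case: m1 m2 => [P1 b1] [[|[d y] P2] b2]; rewrite /mcat /= !mevalE /= ?mul1r ?mulrA //.
by rewrite /word_eval foldr_cat foldr_word_eval /= -/(word_eval P2) !mulrA.
Qed.

Lemma yield_children_cat_leaves b P1 P2 ts2 :
  yield_children f c b (P1 ++ P2) (nseq (size P1) DLeaf ++ ts2) =
  word_eval P1 * yield_children f c b P2 ts2.
Proof. by elim: P1 => [|[a z] P1 IH] /=; rewrite ?mul1r // IH !mulrA. Qed.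

Lemma yield_children_leaves b P : yield_children f c b P (nseq (size P) DLeaf) = word_eval P * b.
Proof. by have := yield_children_cat_leaves b P [::] [::]; rewrite !cats0. Qed.

(* Monomial j of h is (take k m.1 ++ (a, z) :: rest, m.2), and g replaces
   its occurrence of z. *)
Definition occ_subst (h : spoly S X) j k a (rest : seq (S * X)) (g : spoly S X) :=
  let m := nth (mono0 S X) h j in
  take j h ++ [seq mcat (mcat (take k m.1, a) n) (rest, m.2) | n <- g] ++ drop j.+1 h.

Lemma occ_atP h j k z rep : occ_at h j k = Some (z, rep) <->
  exists a rest, [/\ (j < size h)%N, drop k (nth (mono0 S X) h j).1 = (a, z) :: rest
                   & rep = occ_subst h j k a rest].
Proof.
split; last by case=> a [rest [lt_j drop_k ->]]; rewrite /occ_at (drop_nth (mono0 S X) lt_j) drop_k.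
rewrite /occ_at; case drop_j: (drop j h) => [|m hr] //.
have lt_j : (j < size h)%N by case: leqP => // /drop_oversize; rewrite drop_j.
have [m_j hr_j] : m = nth (mono0 S X) h j /\ hr = drop j.+1 h.
  by have := drop_nth (mono0 S X) lt_j; rewrite drop_j => -[].
case drop_k: (drop k m.1) => [|[a z'] rest] // [<- <-]; exists a, rest.
by rewrite -m_j drop_k /occ_subst -m_j hr_j.
Qed.

Lemma spine_dwf y j k a z rest t :
  (j < size (f y))%N -> drop k (mono y j).1 = (a, z) :: rest -> dwf f z t ->
  dwf f y (spine j k t (size rest)).
Proof.
move=> lt_j drop_k wf_t; have [mE size_k] := take_drop_cons drop_k.
rewrite dwfE lt_j /= mE dwf_children_cat; last by rewrite size_nseq.
by rewrite -[X in nseq X _]size_k dwf_children_leaves /= wf_t dwf_children_leaves.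
Qed.

Lemma spine_dyield y j k a z rest t n :
  drop k (mono y j).1 = (a, z) :: rest -> meval n c = dyield f c z t ->
  meval (mcat (mcat (take k (mono y j).1, a) n) (rest, (mono y j).2)) c =
  dyield f c y (spine j k t (size rest)).
Proof.
move=> drop_k n_t; have [mE size_k] := take_drop_cons drop_k.
rewrite /spine dyieldE {2}mE -[X in nseq X _]size_k yield_children_cat_leaves /=.
by rewrite yield_children_leaves !meval_mcat !mevalE n_t !mulrA.
Qed.

Lemma mono_leaves_tree y n : n \in f y ->
  exists t, [/\ dwf f y t, (dtree_dim t <= 1)%N & meval n c = dyield f c y t].
Proof.
move=> n_fy; exists (DNode (index n (f y)) (nseq (size n.1) DLeaf)); split.
- by rewrite dwfE index_mem n_fy nth_index // dwf_children_leaves.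
- exact: leaves_node_dim.
- by rewrite dyieldE nth_index // yield_children_leaves -mevalE; case: n {n_fy}.
Qed.

Lemma linsub_spine_tree cs : forall y g, linsub f y cs = Some g -> forall n, n \in g ->
  exists t, [/\ dwf f y t, (dtree_dim t <= 1)%N & meval n c = dyield f c y t].
Proof.
elim: cs => [|[j k] cs IH] y g /=.
  move=> [<-] n; rewrite mem_seq1 => /eqP ->; exists DLeaf.
  by split => //; rewrite /meval /= mulr1 mul1r.
case occ: (occ_at (f y) j k) => [[z rep]|] //.
case sub_z: (linsub f z cs) => [g'|] //= [<-] n.
have [a [rest [lt_j drop_k ->]]] := (occ_atP _ _ _ _ _).1 occ.
rewrite /occ_subst !mem_cat => /or3P [n_take|/mapP [n' n'_g' ->]|n_drop].
- exact/mono_leaves_tree/(mem_take n_take).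
- have [t [wf_t dim_t n'_t]] := IH z g' sub_z n' n'_g'.
  exists (spine j k t (size rest)); split; [exact: spine_dwf drop_k wf_t | exact: spine_dim |].
  exact: spine_dyield drop_k n'_t.
- exact/mono_leaves_tree/(mem_drop n_drop).
Qed.

Hypothesis f_nonconst : forall x, all (fun m : smono S X => (0 < size m.1)%N) (f x).

Lemma dtree_dim_gt0 t y : dwf f y t -> t != DLeaf -> (0 < dtree_dim t)%N.
Proof.
case: t => [|j ts] // wf_t _; move: wf_t; rewrite dwfE => /andP [lt_j wf_ts].
have := allP (f_nonconst y) _ (mem_nth (mono0 S X) lt_j).
rewrite dtree_dimE (dwf_children_size wf_ts) => size_ts.
by apply: dim_children_gt0; rewrite /= size_child_dims ltnS (leq_trans size_ts) // leq_addr.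
Qed.

Lemma count_nonleaf_le P ts : dwf_children f P ts ->
  (count (fun t => t != DLeaf) ts <= count (fun d => 1 <= d)%N (0%N :: child_dims ts))%N.
Proof.
elim: P ts => [|[a z] P IH] [|t ts] //= /andP [wf_t /IH le_ts].
rewrite !add0n in le_ts *; apply: leq_add => //.
by case: eqP => //= /eqP t_node; rewrite (dtree_dim_gt0 wf_t t_node).
Qed.

Lemma spine_tree_linsub t : forall y, dwf f y t -> (dtree_dim t <= 1)%N ->
  exists cs g n, [/\ linsub f y cs = Some g, n \in g & meval n c = dyield f c y t].
Proof.
elim/dtree_ind_in: t => [|j ts IHts] y.
  move=> _ _; exists [::], (var_poly S y), ([:: (1, y)], 1).
  by split; rewrite ?mem_head // /meval /= mulr1 mul1r.
rewrite dwfE => /andP [lt_j wf_ts]; have size_ts := dwf_children_size wf_ts.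
have := allP (f_nonconst y) _ (mem_nth (mono0 S X) lt_j); rewrite size_ts => ts_gt0.
rewrite dtree_dimE leq_dim_children => /andP [dims_le1 count_le1].
have ts_neq0 : ts != [::] by case: ts ts_gt0 {IHts wf_ts size_ts dims_le1 count_le1}.
have [k [t [r ts_spine]]] := leaves_split ts_neq0 (leq_trans (count_nonleaf_le wf_ts) count_le1).
have size_m : size (mono y j).1 = (k + r).+1.
  by rewrite size_ts ts_spine size_cat /= !size_nseq addnS.
case drop_k: (drop k (mono y j).1) => [|[a z] rest].
  by have := size_drop k (mono y j).1; rewrite drop_k size_m /=; lia.
have size_rest : size rest = r by have := size_drop k (mono y j).1; rewrite drop_k size_m /=; lia.
have [mE size_k] := take_drop_cons drop_k.
have wf_t : dwf f z t.
  by move: wf_ts; rewrite mE ts_spine dwf_children_cat ?size_nseq // => /andP [_ /andP []].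
have dim_t : (dtree_dim t <= 1)%N.
  by move: dims_le1; rewrite ts_spine child_dims_cat /= all_cat /= => /andP [_ /andP []].
have t_ts : t \in ts by rewrite ts_spine mem_cat mem_head orbT.
have [cs [g [n [sub_z n_g n_t]]]] := IHts t t_ts z wf_t dim_t.
exists ((j, k) :: cs), (occ_subst (f y) j k a rest g),
  (mcat (mcat (take k (mono y j).1, a) n) (rest, (mono y j).2)); split.
- have occ : occ_at (f y) j k = Some (z, occ_subst (f y) j k a rest).
    by apply/occ_atP; exists a, rest.
  by rewrite /= occ sub_z.
- by rewrite /occ_subst !mem_cat (map_f (fun n => mcat (mcat _ n) _) n_g) orbT.
- by rewrite ts_spine -size_rest; exact: spine_dyield drop_k n_t.
Qed.

Hypothesis idem : idempotent_sr S.
Hypothesis oc : omega_continuous S.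

Lemma hatf_treesum1 x : hatf f x c = treesum f 1 x c.
Proof.
apply: (csumT_eq idem oc) => [cs|t].
  case sub_x: (linsub f x cs) => [g|]; last exact: nle0.
  apply: (bigsum_lub idem) => n n_g.
  have [t [wf_t dim_t ->]] := linsub_spine_tree sub_x n_g.
  exact: dyield_le_treesum.
case: ifP => [/andP [wf_t dim_t]|_]; last exact: nle0.
have [cs [g [n [sub_x n_g <-]]]] := spine_tree_linsub wf_t dim_t.
apply: nle_trans (bigsum_ub (fun m => meval m c) n_g) _.
have := csumT_ub oc (fun cs => if linsub f x cs is Some g then peval g c else 0) cs.
by rewrite sub_x.
Qed.

End LinearSubstitutions.

Local Close Scope ring_scope.

Theorem theorem6 (S : pzSemiRingType) (X : finType) (f : X -> spoly S X) :
  idempotent_sr S -> omega_continuous S ->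
  (forall x, all (fun m : smono S X => (0 < size m.1)%N) (f x)) ->
  forall (n : nat) (x : X) (c : X -> S),
    Miter f n x c = treesum f (2 ^ n) x c.
Proof.
move=> idem oc f_nonconst; elim=> [|n IH] x c; first exact: hatf_treesum1.
rewrite expnS mul2n -addnn -(treesum_graft idem oc (fun y => IH y c)).
exact: IH.
Qed.
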